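(* Let $\mathcal{G}$ be a fractionally $\mathrm{tree}\text{-}\alpha$-fragile class of graphs and let $c\in\mathbb{N}$ be arbitrary. Then there exists $k\in\mathbb{N}$ such that every $G\in\mathcal{G}$ with $|V(G)|\ge k$ satisfies $s\text{-}\alpha(G)<|V(G)|/c$. In particular, every fractionally $\mathrm{tree}\text{-}\alpha$-fragile class has separators of sublinear independence number.
   Context: $\alpha$ denotes independence number. The tree-independence number $\mathrm{tree}\text{-}\alpha(G)$ is the minimum over tree decompositions $(T,\{X_t\})$ of $G$ (tree $T$, bags covering vertices and edges, each vertex's bags forming a subtree) of $\max_t\alpha(G[X_t])$. For $\beta\le1$, a $\beta$-general cover of $G$ is a multiset $\mathcal{C}$ of subsets of $V(G)$ with each vertex in at least $\beta|\mathcal{C}|$ members. A class $\mathcal{G}$ is fractionally $\mathrm{tree}\text{-}\alpha$-fragile if there is $f\colon\mathbb{N}\to\mathbb{N}$ such that for every $r\in\mathbb{N}$ every $G\in\mathcal{G}$ has a $(1-1/r)$-general cover $\mathcal{C}$ with $\mathrm{tree}\text{-}\alpha(G[C])\le f(r)$ for all $C\in\mathcal{C}$. A separation of $G$ is a pair $(A,B)$ of vertex sets with $A\cup B=V(G)$ and no edge between $A\setminus B$ and $B\setminus A$; it is balanced if $|A\setminus B|,|B\setminus A|\le 2|V(G)|/3$; its independence number is $\alpha(G[A\cap B])$. $s\text{-}\alpha(G)$ is the minimum independence number of a balanced separation of $G$. For a class $\mathcal{G}$, $s\text{-}\alpha_{\mathcal{G}}(n)=\max\{s\text{-}\alpha(G):G\in\mathcal{G},|V(G)|\le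 n\}$, and $\mathcal{G}$ has separators of sublinear independence number if $s\text{-}\alpha_{\mathcal{G}}(n)/n\to0$. *)

From mathcomp Require Import all_boot.
Set Implicit Arguments. Unset Strict Implicit. Unset Printing Implicit Defensive.

Definition graph_class := forall V : finType, rel V -> Prop.

Definition simple_graph (V : finType) (e : rel V) :=
  symmetric e /\ irreflexive e.

Section Defs.
Variables (V : finType) (e : rel V).

Definition indep (S : {set V}) : bool :=
  [forall x in S, forall y in S, ~~ e x y].

Definition alpha (X : {set V}) : nat :=
  \max_(S : {set V} | (S \subset X) && indep S) #|S|.

End Defs.

Definition is_tree (I : finType) (t : rel I) : Prop :=
  [/\ symmetric t, irreflexive t, 0 < #|I|,
      (forall x y : I, connect t x y) &
      (forall s : seq I, uniq s -> 3 <= size s -> ~~ cycle t s)].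

Definition tree_decomp_of (V : finType) (e : rel V) (C : {set V})
  (I : finType) (t : rel I) (bag : I -> {set V}) : Prop :=
  [/\ is_tree t,
      (forall i, bag i \subset C),
      (forall v, v \in C -> exists i, v \in bag i),
      (forall x y, x \in C -> y \in C -> e x y ->
         exists i, (x \in bag i) && (y \in bag i)) &
      (forall v, v \in C -> forall i j, v \in bag i -> v \in bag j ->
         connect [rel a b | [&& t a b, v \in bag a & v \in bag b]] i j)].

(* tree-alpha(G[C]) <= k : some tree decomposition of G[C] has all bags
   of independence number <= k (unfolding the minimum). *)
Definition tree_alpha_le (V : finType) (e : rel V) (C : {set V}) (k : nat)
  : Prop :=
  exists (I : finType) (t : rel I) (bag : I -> {set V}),
    tree_decomp_of e C t bag /\ forall i, alpha e (bag i) <= k.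

(* (1 - 1/r)-general cover (r >= 1): nonempty multiset of vertex subsets,
   each vertex in at least (1-1/r)|cs| members, i.e.
   r * count >= (r-1) * |cs|. *)
Definition general_cover (V : finType) (r : nat) (cs : seq {set V}) : Prop :=
  0 < size cs /\
  forall v : V, (r - 1) * size cs <= r * count (fun C : {set V} => v \in C) cs.

Definition frac_tree_alpha_fragile (P : graph_class) : Prop :=
  exists f : nat -> nat, forall r, 0 < r ->
    forall (V : finType) (e : rel V), P V e ->
      exists cs : seq {set V}, general_cover r cs /\
        forall C, C \in cs -> tree_alpha_le e C (f r).

Section Sep.
Variables (V : finType) (e : rel V).

Definition separation (A B : {set V}) : bool :=
  (A :|: B == setT) &&
  [forall x in A :\: B, forall y in B :\: A, ~~ e x y && ~~ e y x].

Definition balanced_sep (A B : {set V}) : bool :=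
  [&& separation A B, 3 * #|A :\: B| <= 2 * #|V| & 3 * #|B :\: A| <= 2 * #|V|].

(* s-alpha(G): minimum independence number of a balanced separation
   ((setT,setT) is always one, so the default #|V| is never used). *)
Definition s_alpha : nat :=
  \big[minn/#|V|]_(p : {set V} * {set V} | balanced_sep p.1 p.2)
     alpha e (p.1 :&: p.2).
End Sep.

(* s-alpha_G(n)/n -> 0, where s-alpha_G(n) = max{s-alpha(G) : G in P, |V(G)| <= n}:
   for every c >= 1, eventually c * s-alpha_G(n) < n. *)
Definition sublinear_separators (P : graph_class) : Prop :=
  forall c, 0 < c -> exists N, forall n, N <= n ->
    forall (V : finType) (e : rel V), P V e -> #|V| <= n ->
      c * s_alpha e < n.

From mathcomp Require Import all_boot zify.
Set Implicit Arguments. Unset Strict Implicit. Unset Printing Implicit Defensive.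

(* Averaging over a (1 - 1/r)-general cover with r = 2c + 1 yields a member C
   missing at most |V|/r vertices, and G[C] has a tree decomposition whose bags
   have independence number at most f(r).  Some bag X_x of it is a centroid:
   the bags of each component of T - x cover at most |C|/2 vertices of
   C \ X_x.  Grouping these components into two sides of at most 2|V|/3
   vertices each gives a balanced separation whose separator lies in X_x
   together with V \ C, so s-alpha(G) <= f(r) + |V|/r, which is below |V|/c
   as soon as |V| > 2c f(r). *)

Lemma connect_uniq_path (T : finType) (e : rel T) x y :
  connect e x y -> exists p, [/\ path e x p, uniq (x :: p) & last x p = y].
Proof. by move/connectP=> [p /shortenP[p' ? ? _] ->]; exists p'. Qed.

Section TreeComponents.
Variables (I : finType) (t : rel I).
Hypothesis tsym : symmetric t.
Hypothesis tirr : irreflexive t.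
Hypothesis tconn : forall x y, connect t x y.
Hypothesis tacyc : forall s : seq I, uniq s -> 3 <= size s -> ~~ cycle t s.

Definition avoid (x : I) := [rel a b | [&& t a b, a != x & b != x]].

(* [tcomp x u] is the component of [T - x] containing [u]; it is empty for [u = x]. *)
Definition tcomp (x u : I) := [set v | (v != x) && connect (avoid x) u v].

Lemma connect_avoid_sym x : connect_sym (avoid x).
Proof.
by apply: sym_connect_sym => a b /=; rewrite tsym; do 2!case: (_ != x); rewrite ?andbF.
Qed.

Lemma tcomp_id x : tcomp x x = set0.
Proof.
apply/setP => v; rewrite !inE; apply/negP => /andP[vx /connectP[[|a p] /= pth vE]].
  by rewrite vE eqxx in vx.
by case/and3P: (andP pth).1; rewrite eqxx.
Qed.

Lemma tcomp_self x u : u != x -> u \in tcomp x u.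
Proof. by move=> ux; rewrite inE ux connect0. Qed.

Lemma tcomp_eq x u v : v \in tcomp x u -> tcomp x v = tcomp x u.
Proof.
rewrite inE => /andP[_ cuv]; apply/setP => z; rewrite !inE; case: (z != x) => //=.
apply/idP/idP; first exact: connect_trans.
by rewrite connect_avoid_sym in cuv; apply: connect_trans.
Qed.

Lemma path_avoid x a p : path t a p -> x \notin a :: p -> path (avoid x) a p.
Proof.
elim: p a => //= b p IH a /andP[tab pb]; rewrite !inE => /norP[xa /norP[xb xp]].
by rewrite /= tab eq_sym xa eq_sym xb IH // inE negb_or xb.
Qed.

Lemma tcomp_neighbor x u : u != x -> exists2 y, t x y & y \in tcomp x u.
Proof.
move=> ux; have [[|y p] [/= pth uq lst]] := connect_uniq_path (tconn x u).
  by rewrite -lst eqxx in ux.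
case/andP: pth => txy pth; case/andP: uq => xn _; exists y => //.
have yx : y != x by apply: contraNneq xn => ->; rewrite mem_head.
rewrite inE yx connect_avoid_sym; apply/connectP; exists p => //.
exact: path_avoid.
Qed.

(* A path from [y] to [x] avoiding the edge [xy] would close a cycle. *)
Lemma tcomp_edge_disjoint x y u : t x y -> u \in tcomp x y -> u \notin tcomp y x.
Proof.
move=> txy; rewrite !inE => /andP[ux cyu]; apply/negP => /andP[uy cxu].
pose t' := [rel a b | t a b && ~~ (((a == x) && (b == y)) || ((a == y) && (b == x)))].
have avoid_t' z : z \in [:: x; y] -> subrel (avoid z) t'.
  move=> zxy a b /and3P[tab az bz] /=; rewrite tab; move: zxy; rewrite !inE.
  by case/orP=> /eqP <-; rewrite (negbTE az) (negbTE bz) ?andbF.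
have cyx : connect t' y x.
  rewrite connect_avoid_sym in cxu.
  apply: connect_trans (connect_sub _ cyu) (connect_sub _ cxu) => a b abz;
    by apply/connect1/(avoid_t' _ _ _ _ abz); rewrite !inE eqxx ?orbT.
have xy : x != y by apply: contraTneq txy => ->; rewrite tirr.
have [[|z [|w p]] [pth uq /= lst]] := connect_uniq_path cyx.
- by rewrite lst eqxx in xy.
- by move: pth; rewrite /= lst !eqxx orbT andbF.
have t't : subrel t' t by move=> a b /andP[].
have /negP[] := tacyc uq isT.
by rewrite /cycle rcons_path (sub_path t't pth) /= lst.
Qed.

Lemma tcomp_edge_cover x y u : x != y -> u != y -> u \notin tcomp y x -> u \in tcomp x y.
Proof.
move=> xy uy; rewrite !inE uy /= => nyxu.
have ux : u != x by apply: contraNneq nyxu => ->; rewrite connect0.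
rewrite ux /=; have [p [pth uq lst]] := connect_uniq_path (tconn x u).
have : y \in x :: p.
  apply: contraNT nyxu => yp; apply/connectP; exists p => //; exact: path_avoid.
rewrite inE eq_sym (negbTE xy) /= => yp; case/splitPr: yp pth uq lst => p1 p2.
rewrite cat_path /= => /and3P[_ _ pth2] /andP[xn _] lst.
apply/connectP; exists p2; last by rewrite -lst last_cat.
by apply: path_avoid => //; apply: contra xn; rewrite mem_cat => ->; rewrite orbT.
Qed.

End TreeComponents.

Lemma balanced_fiber_split (T K : finType) (W : {set T}) (L : T -> K) n :
  #|W| <= n -> (forall w, w \in W -> 2 * #|W :&: L @^-1: [set L w]| <= n) ->
  exists S : {set K},
    3 * #|W :&: L @^-1: S| <= 2 * n /\ 3 * #|W :\: L @^-1: S| <= 2 * n.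
Proof.
move=> Wn fiber_small.
case: (boolP [exists w in W, n <= 3 * #|W :&: L @^-1: [set L w]|]).
  case/exists_inP => w wW big; exists [set L w].
  have := fiber_small w wW; have := cardsID (L @^-1: [set L w]) W; lia.
rewrite negb_exists_in => /forall_inP fibers_tiny.
pose small (S : {set K}) := 3 * #|W :&: L @^-1: S| <= 2 * n.
have small0 : small set0 by rewrite /small preimset0 setI0 cards0.
case: (arg_maxnP (fun S : {set K} => #|W :&: L @^-1: S|) small0) => S part_small maxS.
exists S; split => //; rewrite leqNgt; apply/negP => big.
have part_tiny : 3 * #|W :&: L @^-1: S| < n by have := cardsID (L @^-1: S) W; lia.
have /set0Pn[w] : W :\: L @^-1: S != set0 by rewrite -card_gt0; lia.
rewrite in_setD inE => /andP[wS wW].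
have partU : W :&: L @^-1: (L w |: S) = (W :&: L @^-1: S) :|: (W :&: L @^-1: [set L w]).
  by rewrite preimsetU setIUr setUC.
have : W :&: L @^-1: S \proper W :&: L @^-1: (L w |: S).
  apply/properP; split; first by rewrite partU subsetUl.
  by exists w; rewrite !inE ?eqxx ?wW // (negbTE wS).
move/proper_card; rewrite ltnNge => /negP; apply; apply: maxS.
rewrite /small partU; have := fibers_tiny w wW; rewrite -ltnNge.
have [le _] := leq_card_setU (W :&: L @^-1: S) (W :&: L @^-1: [set L w]); lia.
Qed.

Section Independence.
Variables (V : finType) (e : rel V).

Lemma indepS (S S' : {set V}) : S' \subset S -> indep e S -> indep e S'.
Proof.
move=> sub /forall_inP indS; apply/forall_inP => x xS'; apply/forall_inP => y yS'.
by move/forall_inP: (indS x (subsetP sub x xS')) => /(_ y (subsetP sub y yS')).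
Qed.

Lemma alpha_leq_card (X : {set V}) : alpha e X <= #|X|.
Proof. by apply/bigmax_leqP => S /andP[sub _]; apply: subset_leq_card. Qed.

Lemma alphaS (X Y : {set V}) : X \subset Y -> alpha e X <= alpha e Y.
Proof.
move=> XY; apply/bigmax_leqP => S /andP[SX indS]; apply: leq_bigmax_cond.
by rewrite indS (subset_trans SX XY).
Qed.

Lemma alphaU (X Y : {set V}) : alpha e (X :|: Y) <= alpha e X + alpha e Y.
Proof.
apply/bigmax_leqP => S /andP[SXY indS].
have alphaI Z : #|S :&: Z| <= alpha e Z.
  by apply: leq_bigmax_cond; rewrite subsetIr (indepS (subsetIl _ _) indS).
have -> : S = (S :&: X) :|: (S :&: Y) by rewrite -setIUr; apply/esym/setIidPl.
by apply: leq_trans (leq_card_setU _ _).1 _; apply: leq_add.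
Qed.

End Independence.

Section Separations.
Variables (V : finType) (e : rel V).

Lemma balanced_sep_setC (X1 X2 : {set V}) :
  [disjoint X1 & X2] -> 3 * #|X1| <= 2 * #|V| -> 3 * #|X2| <= 2 * #|V| ->
  (forall x y, x \in X1 -> y \in X2 -> ~~ e x y && ~~ e y x) ->
  balanced_sep e (~: X2) (~: X1).
Proof.
move=> dis X1small X2small noedge.
have D12 : ~: X2 :\: ~: X1 = X1.
  by rewrite setDE setCK setIC; apply/setIidPl; rewrite -disjoints_subset.
have D21 : ~: X1 :\: ~: X2 = X2.
  by rewrite setDE setCK setIC; apply/setIidPl; rewrite -disjoints_subset disjoint_sym.
rewrite /balanced_sep /separation D12 D21 X1small X2small !andbT -setCI.
have -> : X2 :&: X1 = set0 by apply: disjoint_setI0; rewrite disjoint_sym.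
by rewrite setC0 eqxx; apply/forall_inP => x x1; apply/forall_inP => y y2; apply: noedge.
Qed.

Lemma s_alpha_leq_sep (A B : {set V}) :
  balanced_sep e A B -> s_alpha e <= alpha e (A :&: B).
Proof.
move=> bal; rewrite /s_alpha.
have : (A, B) \in index_enum (prod {set V} {set V}) by rewrite mem_index_enum.
elim: (index_enum _) => [|p r IH] //; rewrite big_cons inE => /predU1P[<-|pr].
  by rewrite bal geq_minl.
by case: ifP => _; rewrite ?geq_min IH ?orbT.
Qed.

Lemma s_alpha_leq_card : s_alpha e <= #|V|.
Proof.
rewrite /s_alpha; elim/big_ind: _ => [//|a b ha hb|p _]; first by rewrite geq_min ha.
exact: leq_trans (alpha_leq_card _ _) (max_card _).
Qed.

End Separations.

Section TreeDecomposition.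
Variables (V : finType) (e : rel V) (C : {set V}).
Variables (I : finType) (t : rel I) (bag : I -> {set V}).
Hypothesis td : tree_decomp_of e C t bag.

Let tsym : symmetric t. Proof. by case: td => [[]]. Qed.
Let tirr : irreflexive t. Proof. by case: td => [[]]. Qed.
Let tconn : forall x y, connect t x y. Proof. by case: td => [[]]. Qed.
Let tacyc : forall s : seq I, uniq s -> 3 <= size s -> ~~ cycle t s.
Proof. by case: td => [[]]. Qed.

Lemma mem_tcomp_bags w x a b :
  w \in C -> w \notin bag x -> w \in bag a -> w \in bag b -> b \in tcomp t x a.
Proof.
move=> wC wx wa wb; rewrite inE; apply/andP; split; first by apply: contraNneq wx => <-.
case: td => _ _ _ _ /(_ w wC a b wa wb); apply: connect_sub => a' b' /and3P[ta'b' wa' wb'].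
by apply: connect1; rewrite /= ta'b' /=; apply/andP; split; apply: contraNneq wx => <-.
Qed.

Definition comp_verts x (K : {set I}) :=
  [set w in C :\: bag x | [exists a in K, w \in bag a]].

Lemma comp_verts0 x : comp_verts x set0 = set0.
Proof.
apply/setP => w; rewrite !inE; apply/negbTE/nandP; right.
by apply/exists_inP => -[a]; rewrite inE.
Qed.

Lemma comp_verts_sub x K : comp_verts x K \subset C.
Proof. by apply/subsetP => w; rewrite !inE => /andP[/andP[]]. Qed.

Lemma comp_verts_edge x y :
  t x y -> #|comp_verts y (tcomp t y x)| + #|comp_verts x (tcomp t x y)| <= #|C|.
Proof.
move=> txy; rewrite -cardsUI.
have -> : comp_verts y (tcomp t y x) :&: comp_verts x (tcomp t x y) = set0.
  apply/setP => w; rewrite !inE; apply/negP.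
  case/andP => /andP[/andP[wy wC] /exists_inP[a ayx wa]].
  case/andP => /andP[wx _] /exists_inP[b bxy wb].
  have /negP[] := tcomp_edge_disjoint tsym tirr tacyc txy bxy.
  by rewrite -(tcomp_eq tsym ayx) (mem_tcomp_bags wC wy wa wb).
by rewrite cards0 addn0 subset_leq_card // subUset !comp_verts_sub.
Qed.

Lemma centroid_bag : exists x, forall u, 2 * #|comp_verts x (tcomp t x u)| <= #|C|.
Proof.
pose heavy (p : I * I) := #|C| < 2 * #|comp_verts p.1 (tcomp t p.1 p.2)|.
have [[x0 u0] heavy0|no_heavy] := pickP heavy; last first.
  case: td => [[_ _ /card_gt0P[x _] _ _] _ _ _ _].
  by exists x => u; rewrite leqNgt; apply/negbT/(no_heavy (x, u)).
case: (arg_minnP (fun p : I * I => #|tcomp t p.1 p.2|) heavy0) => [[x u]] xu_heavy minxu.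
have ux : u != x.
  by apply: contraTneq xu_heavy => ->; rewrite /heavy /= tcomp_id comp_verts0 cards0.
have [y txy yu] := tcomp_neighbor tsym tconn ux.
have cxy : tcomp t x y = tcomp t x u := tcomp_eq tsym yu.
have xy : x != y by apply: contraTneq txy => ->; rewrite tirr.
exists y => u'; rewrite leqNgt; apply/negP => yu'_heavy.
have yu'x v : v \in tcomp t y u' -> v \notin tcomp t y x.
  move=> vu'; apply/negP => vx; have := comp_verts_edge txy.
  move: xu_heavy yu'_heavy; rewrite /heavy /= -cxy -(tcomp_eq tsym vu') (tcomp_eq tsym vx).
  lia.
have sub : tcomp t y u' \proper tcomp t x u.
  rewrite -cxy; apply/properP; split.
    apply/subsetP => v vu'; apply: tcomp_edge_cover => //; last exact: yu'x.
    by move: vu'; rewrite inE => /andP[].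
  by exists y; rewrite ?tcomp_self 1?eq_sym // inE eqxx.
by have := minxu (y, u') yu'_heavy; rewrite /= leqNgt (proper_card sub).
Qed.

(* The component of [T - x] holding the bags of [w]; by the subtree property it
   does not depend on the chosen bag when [w \in C :\: bag x].  Junk [set0] for
   vertices lying in no bag. *)
Definition comp_label x w :=
  if [pick a | w \in bag a] is Some a then tcomp t x a else set0.

Lemma comp_label_bag x w a :
  w \in C -> w \notin bag x -> w \in bag a -> comp_label x w = tcomp t x a.
Proof.
move=> wC wx wa; rewrite /comp_label; case: pickP => [b wb|no_bag]; last first.
  by rewrite no_bag in wa.
by apply/esym/(tcomp_eq tsym); apply: mem_tcomp_bags wC wx wb wa.
Qed.

Lemma comp_label_edge x u v :
  u \in C :\: bag x -> v \in C :\: bag x -> e u v -> comp_label x u = comp_label x v.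
Proof.
rewrite !inE => /andP[ux uC] /andP[vx vC] euv.
case: td => _ _ _ /(_ u v uC vC euv)[i /andP[ui vi]] _.
by rewrite (comp_label_bag uC ux ui) (comp_label_bag vC vx vi).
Qed.

Lemma mem_comp_verts_label x w : w \in C :\: bag x -> w \in comp_verts x (comp_label x w).
Proof.
move=> wW; move: (wW); rewrite inE => /andP[wx wC].
case: td => _ _ /(_ w wC)[a wa] _ _.
rewrite (comp_label_bag wC wx wa) inE wW; apply/exists_inP; exists a => //.
by rewrite tcomp_self //; apply: contraNneq wx => <-.
Qed.

Lemma s_alpha_tree_decomp k :
  (forall i, alpha e (bag i) <= k) -> s_alpha e <= k + #|~: C|.
Proof.
move=> bags_small; have [x centroid] := centroid_bag.
set W := C :\: bag x; set L := comp_label x.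
have fibers_small w : w \in W -> 2 * #|W :&: L @^-1: [set L w]| <= #|V|.
  move=> wW; apply: leq_trans (max_card C); move: (wW); rewrite inE => /andP[wx wC].
  case: td => _ _ /(_ w wC)[a wa] _ _.
  apply: leq_trans (centroid a); rewrite leq_mul2l /= -(comp_label_bag wC wx wa).
  apply/subset_leq_card/subsetP => w' /setIP[w'W w'Lw].
  have -> : comp_label x w = L w' by apply/esym/eqP; move: w'Lw; rewrite !inE.
  exact: mem_comp_verts_label.
have [S [X1_small X2_small]] := balanced_fiber_split (max_card W) fibers_small.
have sep : balanced_sep e (~: (W :\: L @^-1: S)) (~: (W :&: L @^-1: S)).
  apply: balanced_sep_setC => //.
    by rewrite disjoints_subset; apply/subsetP => w; rewrite !inE => /andP[-> ->].
  move=> u v /setIP[uW uS] /setDP[vW vS].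
  have Luv : L u != L v.
    by rewrite inE in uS; rewrite inE in vS; apply: contraNneq vS => <-.
  by apply/andP; split; apply: contra Luv => euv; apply/eqP;
    [|apply/esym]; apply: comp_label_edge.
have sepI : ~: (W :\: L @^-1: S) :&: ~: (W :&: L @^-1: S) \subset bag x :|: ~: C.
  by apply/subsetP => w; rewrite !inE; case: (w \in bag x); case: (w \in C); case: (_ \in S).
apply: leq_trans (s_alpha_leq_sep sep) _; apply: leq_trans (alphaS e sepI) _.
exact: leq_trans (alphaU e _ _) (leq_add (bags_small x) (alpha_leq_card e _)).
Qed.

End TreeDecomposition.

Lemma sum_card_count (V : finType) (cs : seq {set V}) :
  \sum_(C <- cs) #|C| = \sum_(v : V) count (fun C : {set V} => v \in C) cs.
Proof.
elim: cs => [|C cs IH]; first by rewrite big_nil big1.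
rewrite big_cons big_split /= IH; congr (_ + _).
by rewrite -sum1_card big_mkcond; apply: eq_bigr => v _; case: (v \in C).
Qed.

Lemma sum_seq_const (T : Type) (s : seq T) n : \sum_(x <- s) n = size s * n.
Proof. by elim: s => [|x s IH]; rewrite ?big_nil // big_cons IH mulSn. Qed.

Lemma general_cover_dense (V : finType) r (cs : seq {set V}) :
  0 < r -> general_cover r cs -> exists2 C, C \in cs & r * #|~: C| <= #|V|.
Proof.
case: r => // r _ [cs0 covered]; apply/hasP/negPn/negP => /hasPn all_sparse.
have upper : r.+1 * \sum_(C <- cs) #|~: C| <= #|V| * size cs.
  rewrite -(big_map (@setC V) predT (fun C => #|C|)) sum_card_count.
  rewrite big_distrr -sum_nat_const /=.
  apply: leq_sum => v _; rewrite count_map.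
  pose has_v (C : {set V}) := v \in C.
  have -> : count (preim (@setC V) has_v) cs = count (predC has_v) cs.
    by apply: eq_count => C; rewrite /= /has_v in_setC.
  have := count_predC has_v cs; have := covered v; rewrite subSS subn0 -/has_v => cov sE.
  by rewrite -sE mulnDr !mulSn in cov *; lia.
have lower : size cs * #|V|.+1 <= r.+1 * \sum_(C <- cs) #|~: C|.
  rewrite -sum_seq_const big_distrr big_seq [X in _ <= X]big_seq.
  by apply: leq_sum => C Ccs; rewrite ltnNge all_sparse.
by have := leq_trans lower upper; rewrite mulnC leq_pmul2r // ltnn.
Qed.

Lemma fragile_s_alpha_small (P : graph_class) : frac_tree_alpha_fragile P ->
  forall c, exists k, forall (V : finType) (e : rel V),
    P V e -> k <= #|V| -> c * s_alpha e < #|V|.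
Proof.
case=> f fragile c; exists (2 * c * f (2 * c).+1).+1 => V e PVe large.
have [cs [cover tw_small]] := fragile _ (ltn0Sn (2 * c)) V e PVe.
have [C Ccs sparse] := general_cover_dense (ltn0Sn _) cover.
have [I [t [bag [td bags_small]]]] := tw_small C Ccs.
have := s_alpha_tree_decomp td bags_small; nia.
Qed.

Lemma sublinear_separators_eventually (P : graph_class) :
  (forall c, exists k, forall (V : finType) (e : rel V),
     P V e -> k <= #|V| -> c * s_alpha e < #|V|) ->
  sublinear_separators P.
Proof.
move=> small c _; have [k small_k] := small c; exists (c * k).+1 => n large V e PVe Vn.
case: (leqP k #|V|) => [Vk|Vk]; first exact: leq_trans (small_k V e PVe Vk) Vn.
apply: leq_ltn_trans large.
exact: leq_mul (leqnn c) (leq_trans (s_alpha_leq_card e) (ltnW Vk)).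
Qed.

Theorem lemma5p4 (P : graph_class) :
  (forall (V : finType) (e : rel V), P V e -> simple_graph e) ->
  frac_tree_alpha_fragile P ->
  (forall c : nat, exists k : nat, forall (V : finType) (e : rel V),
      P V e -> k <= #|V| -> c * s_alpha e < #|V|)
  /\ sublinear_separators P.
Proof.
move=> _ fragile; have small := fragile_s_alpha_small fragile.
by split; last exact: sublinear_separators_eventually.
Qed.
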